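(* Let $P=\{p_1,\dots,p_n\}\subset\mathbb{R}^2$ be in general position and let $M\colon(\mathbb{R}^2)^n\to\mathbb{R}^{\binom n2}$, $M(v)=(\langle p_i-p_j,v_i-v_j\rangle)_{i<j}$. For $\delta\in\mathbb{R}^{\binom n2}$ the following are equivalent: (a) $\delta\in\operatorname{Im}M$; (b) for every four distinct indices $i_1,i_2,i_3,i_4$, $\sum_{i<j,\ i,j\in\{i_1,\dots,i_4\}} w_{ij}\delta_{ij}=0$, where $(w_{ij})$ is a nonzero self-stress of the complete graph on $p_{i_1},\dots,p_{i_4}$.
   Context: General position: no three points collinear. A self-stress of a graph on points $q_i$ is an assignment $w_{ij}$ to edges with $\sum_{j:ij\text{ edge}}w_{ij}(q_i-q_j)=0$ for every vertex $i$; for four points in general position the complete graph has a unique self-stress up to scaling. *)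

From HB Require Import structures.
From mathcomp Require Import all_boot all_order all_algebra.
Set Implicit Arguments. Unset Strict Implicit. Unset Printing Implicit Defensive.
Import Order.TTheory GRing.Theory Num.Theory.
Local Open Scope ring_scope.

Definition dot2 {R : ringType} (u v : 'rV[R]_2) : R :=
  \sum_(k < 2) u 0 k * v 0 k.

Definition det2 {R : ringType} (u v : 'rV[R]_2) : R :=
  u 0 0 * v 0 1 - u 0 1 * v 0 0.

Definition general_position {R : ringType} (n : nat) (p : 'I_n -> 'rV[R]_2) :=
  injective p /\
  forall i j k : 'I_n, i != j -> j != k -> i != k ->
    det2 (p j - p i) (p k - p i) != 0.

Definition self_stress {R : ringType} (n : nat) (p : 'I_n -> 'rV[R]_2)
    (S : {set 'I_n}) (w : 'I_n -> 'I_n -> R) :=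
  (forall a b, a \in S -> b \in S -> a != b -> w a b = w b a) /\
  (forall a, a \in S -> \sum_(b in S | b != a) w a b *: (p a - p b) = 0).

Definition nonzero_on {R : ringType} (n : nat) (S : {set 'I_n})
    (w : 'I_n -> 'I_n -> R) :=
  exists a b, [/\ a \in S, b \in S, a != b & w a b != 0].

(* The linear map M : (R^2)^n -> R^(n choose 2); a vector of R^(n choose 2)
   is represented by delta : 'I_n -> 'I_n -> R, only entries with i < j
   being meaningful. *)
Definition in_image_M {R : ringType} (n : nat) (p : 'I_n -> 'rV[R]_2)
    (delta : 'I_n -> 'I_n -> R) :=
  exists v : 'I_n -> 'rV[R]_2,
    forall i j : 'I_n, (i < j)%N -> delta i j = dot2 (p i - p j) (v i - v j).

From HB Require Import structures.
From mathcomp Require Import all_boot all_order all_algebra.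
From mathcomp Require Import ring zify.
Import Order.TTheory GRing.Theory Num.Theory.
Local Open Scope ring_scope.
Set Implicit Arguments. Unset Strict Implicit. Unset Printing Implicit Defensive.

(* (a) => (b): pairing M v with a self-stress w and regrouping the sum by
   vertices turns it into the equilibrium sums of w paired with the v_a, so
   every self-stress is orthogonal to the image of M.
   (b) => (a): put v = 0 at the first point, fit the edge between the first two
   points with a multiple of their difference, and for every other point k
   solve the 2x2 linear system given by its edges to the first two points (its
   determinant is nonzero since the three points are not collinear).  The
   error delta - M v then vanishes on every edge touching the first two points.
   For a remaining edge kl, the affine dependency lam of the four points 0, 1,
   k, l has only nonzero coefficients and lam_a lam_b is a self-stress on them;
   testing (b) against it leaves only lam_k lam_l times the error at kl. *)

Section FiniteSums.
Variables (V : nmodType) (n : nat).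
Implicit Types (a b c d : 'I_n) (S : {set 'I_n}).

Lemma big_set4 a b c d (F : 'I_n -> V) : uniq [:: a; b; c; d] ->
  \sum_(x in [set a; b; c; d]) F x = F a + F b + F c + F d.
Proof.
rewrite /= !inE !negb_or !andbT => /and3P[/and3P[ab ac ad] /andP[bc bd] cd].
rewrite -!setUA !big_setU1 ?big_set1 ?inE ?negb_or ?ab ?ac ?ad ?bc ?bd ?cd //=.
by rewrite !addrA.
Qed.

Lemma sum_pairs_set4 a b c d (F : 'I_n -> 'I_n -> V) :
  (a < b < c)%N -> (c < d)%N ->
  \sum_(x in [set a; b; c; d]) \sum_(y in [set a; b; c; d] | (x < y)%N) F x y
  = F a b + F a c + F a d + F b c + F b d + F c d.
Proof.
move=> /andP[ab bc] cd.
have U : uniq [:: a; b; c; d] by rewrite /= !inE -!(inj_eq val_inj) /=; lia.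
under eq_bigr do rewrite big_mkcondr /= big_set4 //.
rewrite big_set4 //=; repeat (case: ifP => ?; try lia).
by rewrite !(addr0, add0r) !addrA.
Qed.

Lemma sum_pairs_symmetrize S (g : 'I_n -> 'I_n -> V) :
  \sum_(a in S) \sum_(b in S | (a < b)%N) (g a b + g b a)
  = \sum_(a in S) \sum_(b in S | b != a) g a b.
Proof.
under eq_bigr do rewrite big_split /=.
rewrite big_split /= [X in _ + X](exchange_big_dep (mem S)) /=; last by move=> a b _ /andP[].
rewrite -big_split /=; apply: eq_bigr => a aS.
rewrite [RHS](bigID (fun b : 'I_n => (a < b)%N)) /=; congr (_ + _); apply: eq_bigl => b.
  by rewrite -(inj_eq val_inj) /=; case: (b \in S); case: ltngtP.
by rewrite aS -(inj_eq val_inj) /=; case: (b \in S); case: ltngtP.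
Qed.
End FiniteSums.

Section Plane.
Variable R : realFieldType.
Implicit Types (u z : 'rV[R]_2).

Lemma dot2E u z : dot2 u z = u 0 0 * z 0 0 + u 0 1 * z 0 1.
Proof. by rewrite /dot2 big_ord_recl big_ord1 (_ : lift ord0 ord0 = 1) //; apply: val_inj. Qed.

Lemma row2P u z : u 0 0 = z 0 0 -> u 0 1 = z 0 1 -> u = z.
Proof.
move=> e0 e1; apply/rowP => -[[|[|//]] lt_j2].
  by rewrite (_ : Ordinal lt_j2 = 0) //; apply: val_inj.
by rewrite (_ : Ordinal lt_j2 = 1) //; apply: val_inj.
Qed.

Lemma dot2_suml I (r : seq I) (P : pred I) (F : I -> 'rV[R]_2) z :
  dot2 (\sum_(i <- r | P i) F i) z = \sum_(i <- r | P i) dot2 (F i) z.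
Proof.
apply: (big_morph (dot2^~ z)); last by rewrite dot2E !mxE; ring.
by move=> u1 u2; rewrite !dot2E !mxE; ring.
Qed.

Lemma dot2Zl c u z : dot2 (c *: u) z = c * dot2 u z.
Proof. by rewrite !dot2E !mxE; ring. Qed.

Lemma dot2Zr c u z : dot2 u (c *: z) = c * dot2 u z.
Proof. by rewrite !dot2E !mxE; ring. Qed.

Lemma dot2Br u z1 z2 : dot2 u (z1 - z2) = dot2 u z1 - dot2 u z2.
Proof. by rewrite !dot2E !mxE; ring. Qed.

Lemma dot2Nr u z : dot2 u (- z) = - dot2 u z.
Proof. by rewrite !dot2E !mxE; ring. Qed.

Lemma dot2NN u z : dot2 (- u) (- z) = dot2 u z.
Proof. by rewrite !dot2E !mxE; ring. Qed.

Lemma dot2_self_eq0 u : (dot2 u u == 0) = (u == 0).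
Proof.
rewrite dot2E -!expr2 paddr_eq0 ?sqr_ge0 // !sqrf_eq0.
apply/andP/eqP => [[/eqP u0 /eqP u1] | ->]; last by rewrite !mxE !eqxx.
by apply: row2P; rewrite mxE.
Qed.

Lemma dot2_scale_self u c : u != 0 -> dot2 u ((c / dot2 u u) *: u) = c.
Proof. by rewrite -dot2_self_eq0 dot2Zr => /mulfVK. Qed.

Definition cramer2 (a b : 'rV[R]_2) (x y : R) : 'rV[R]_2 :=
  \row_j (if j == 0 then (x * b 0 1 - y * a 0 1) / det2 a b
          else (a 0 0 * y - b 0 0 * x) / det2 a b).

Lemma dot2_cramer2 a b x y : det2 a b != 0 ->
  dot2 a (cramer2 a b x y) = x /\ dot2 b (cramer2 a b x y) = y.
Proof.
by rewrite /det2 => det_ab; rewrite !dot2E !mxE /= /det2; split; field.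
Qed.

Lemma self_stress_orthogonal n (p v : 'I_n -> 'rV[R]_2) S w :
  self_stress p S w ->
  \sum_(a in S) \sum_(b in S | (a < b)%N) w a b * dot2 (p a - p b) (v a - v b) = 0.
Proof.
case=> w_sym w_eq; pose g a b := w a b * dot2 (p a - p b) (v a).
transitivity (\sum_(a in S) \sum_(b in S | (a < b)%N) (g a b + g b a)).
  apply: eq_bigr => a aS; apply: eq_bigr => b /andP[bS lt_ab].
  rewrite /g (w_sym b a) -?(inj_eq val_inj) /= ?gtn_eqF //.
  by rewrite !dot2E !mxE; ring.
rewrite sum_pairs_symmetrize; apply: big1 => a aS.
under eq_bigr do rewrite /g -dot2Zl.
by rewrite -dot2_suml w_eq // dot2E !mxE; ring.
Qed.

Lemma affine_dependency_self_stress n (p : 'I_n -> 'rV[R]_2) (S : {set 'I_n})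
    (lam : 'I_n -> R) :
  \sum_(b in S) lam b = 0 -> \sum_(b in S) lam b *: p b = 0 ->
  self_stress p S (fun a b => lam a * lam b).
Proof.
move=> sum_lam sum_lam_p; split=> [a b _ _ _ | a aS]; first exact: mulrC.
transitivity (\sum_(b in S) (lam a * lam b) *: (p a - p b)).
  by rewrite [RHS](bigD1 a) //= subrr scaler0 add0r.
under eq_bigr do rewrite scalerBr.
rewrite sumrB -scaler_suml -mulr_sumr sum_lam mulr0 scale0r sub0r.
under eq_bigr do rewrite -scalerA.
by rewrite -scaler_sumr sum_lam_p scaler0 oppr0.
Qed.

Lemma general_position_affine_dependency4 n (p : 'I_n -> 'rV[R]_2) a b c d :
  general_position p -> uniq [:: a; b; c; d] ->
  exists lam : 'I_n -> R,
    [/\ \sum_(x in [set a; b; c; d]) lam x = 0,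
        \sum_(x in [set a; b; c; d]) lam x *: p x = 0 &
        forall x, x \in [set a; b; c; d] -> lam x != 0].
Proof.
case=> _ gp abcd; have dcba : uniq [:: d; c; b; a] by rewrite -rev_uniq.
move: abcd dcba; rewrite /= !inE !negb_or !andbT.
move=> /and3P[/and3P[ab ac ad] /andP[bc bd] cd].
move=> /and3P[/and3P[dc db da] /andP[cb ca] ba].
pose lam x := if x == a then det2 (p c - p b) (p d - p b)
  else if x == b then - det2 (p c - p a) (p d - p a)
  else if x == c then det2 (p b - p a) (p d - p a)
  else - det2 (p b - p a) (p c - p a).
have [lam_a lam_b lam_c lam_d] : [/\ lam a = det2 (p c - p b) (p d - p b),
    lam b = - det2 (p c - p a) (p d - p a), lam c = det2 (p b - p a) (p d - p a)
    & lam d = - det2 (p b - p a) (p c - p a)].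
  by rewrite /lam !eqxx (negbTE ba) (negbTE ca) (negbTE cb) (negbTE da)
    (negbTE db) (negbTE dc).
have abcd : uniq [:: a; b; c; d] by rewrite /= !inE !negb_or ab ac ad bc bd cd.
exists lam; split; rewrite ?big_set4 // ?lam_a ?lam_b ?lam_c ?lam_d.
- by rewrite /det2 !mxE; ring.
- by apply: row2P; rewrite /det2 !mxE; ring.
move=> x; rewrite !inE -!orbA => /or4P[] /eqP->;
  rewrite ?lam_a ?lam_b ?lam_c ?lam_d ?oppr_eq0; exact: gp.
Qed.

Definition four_point_stress_condition n (p : 'I_n -> 'rV[R]_2)
    (delta : 'I_n -> 'I_n -> R) :=
  forall i1 i2 i3 i4 : 'I_n, uniq [:: i1; i2; i3; i4] ->
  forall w : 'I_n -> 'I_n -> R,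
    self_stress p [set i1; i2; i3; i4] w -> nonzero_on [set i1; i2; i3; i4] w ->
    \sum_(a in [set i1; i2; i3; i4])
      \sum_(b in [set i1; i2; i3; i4] | (a < b)%N) w a b * delta a b = 0.

Section Extension.
Variables (m : nat) (p : 'I_m.+2 -> 'rV[R]_2) (delta : 'I_m.+2 -> 'I_m.+2 -> R).
Hypotheses (gp : general_position p) (four : four_point_stress_condition p delta).

Let i0 : 'I_m.+2 := ord0.
Let i1 : 'I_m.+2 := Ordinal (isT : (1 < m.+2)%N).
Let v1 := (delta i0 i1 / dot2 (p i1 - p i0) (p i1 - p i0)) *: (p i1 - p i0).
Let v (x : 'I_m.+2) :=
  if x == i0 then 0 else if x == i1 then v1 else
  cramer2 (p i0 - p x) (p i1 - p x) (- delta i0 x) (dot2 (p i1 - p x) v1 - delta i1 x).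

Lemma solution_fit01 : delta i0 i1 = dot2 (p i0 - p i1) (v i0 - v i1).
Proof.
have p10 : p i1 - p i0 != 0 by rewrite subr_eq0; apply/eqP => /gp.1.
by rewrite /v /= sub0r -opprB dot2NN dot2_scale_self.
Qed.

Lemma dot2_solution_far (k : 'I_m.+2) : (1 < k)%N ->
  dot2 (p i0 - p k) (v k) = - delta i0 k /\
  dot2 (p i1 - p k) (v k) = dot2 (p i1 - p k) v1 - delta i1 k.
Proof.
move=> lt1k; have [k0 k1] : k != i0 /\ k != i1.
  by split; rewrite -(inj_eq val_inj) /=; lia.
rewrite /v (negbTE k0) (negbTE k1); apply: dot2_cramer2.
by apply: gp.2.
Qed.

Lemma solution_fit0 (k : 'I_m.+2) : (1 < k)%N ->
  delta i0 k = dot2 (p i0 - p k) (v i0 - v k).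
Proof.
have -> : v i0 = 0 by rewrite /v eqxx.
by move=> /dot2_solution_far[fit0 _]; rewrite sub0r dot2Nr fit0 opprK.
Qed.

Lemma solution_fit1 (k : 'I_m.+2) : (1 < k)%N ->
  delta i1 k = dot2 (p i1 - p k) (v i1 - v k).
Proof.
have -> : v i1 = v1 by [].
by move=> /dot2_solution_far[_ fit1]; rewrite dot2Br fit1 subKr.
Qed.

Lemma solution_fit_far (k l : 'I_m.+2) : (1 < k)%N -> (k < l)%N ->
  delta k l = dot2 (p k - p l) (v k - v l).
Proof.
move=> lt1k lt_kl; have lt1l := ltn_trans lt1k lt_kl.
have U : uniq [:: i0; i1; k; l] by rewrite /= !inE -!(inj_eq val_inj) /=; lia.
have [lam [sum_lam sum_lam_p lam_nz]] := general_position_affine_dependency4 gp U.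
have stress := affine_dependency_self_stress sum_lam sum_lam_p.
have lam_kl : lam k * lam l != 0 by rewrite mulf_neq0 ?lam_nz // !inE eqxx ?orbT.
have nz : nonzero_on [set i0; i1; k; l] (fun a b => lam a * lam b).
  by exists k, l; split; rewrite ?inE ?eqxx ?orbT // -(inj_eq val_inj) /= ltn_eqF.
have := four U stress nz; have := self_stress_orthogonal v stress.
rewrite !sum_pairs_set4 ?lt1k // -solution_fit01 -!solution_fit0 // -!solution_fit1 //.
by move=> <- /addrI /(mulfI lam_kl).
Qed.

Lemma in_image_of_four_point_condition : in_image_M p delta.
Proof.
exists v => i j lt_ij; have [lt1i | ] := ltnP 1 i; first exact: solution_fit_far.
rewrite leq_eqVlt ltnS leqn0 => /orP[/eqP i_1 | /eqP i_0].
  have -> : i = i1 by apply: val_inj.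
  by apply: solution_fit1; rewrite -i_1.
have -> : i = i0 by apply: val_inj.
have [lt1j | le_j1] := ltnP 1 j; first exact: solution_fit0.
have -> : j = i1 by apply: val_inj => /=; lia.
exact: solution_fit01.
Qed.

End Extension.
End Plane.

Theorem lemma5p1 (R : realFieldType) (n : nat) (p : 'I_n -> 'rV[R]_2)
    (delta : 'I_n -> 'I_n -> R) :
  general_position p ->
  (in_image_M p delta <->
   forall i1 i2 i3 i4 : 'I_n,
     uniq [:: i1; i2; i3; i4] ->
     forall w : 'I_n -> 'I_n -> R,
       self_stress p [set i1; i2; i3; i4] w ->
       nonzero_on [set i1; i2; i3; i4] w ->
       \sum_(a in [set i1; i2; i3; i4])
         \sum_(b in [set i1; i2; i3; i4] | (a < b)%N) w a b * delta a b = 0).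
Proof.
move=> gp; split=> [[v Mv] i1 i2 i3 i4 _ w stress _ | four].
  rewrite -[RHS](self_stress_orthogonal v stress); apply: eq_bigr => a _.
  by apply: eq_bigr => b /andP[_ lt_ab]; rewrite Mv.
case: n p delta gp four => [|[|m]] p delta gp four.
- by exists (fun=> 0) => -[].
- by exists (fun=> 0) => i j; rewrite (ord1 i) (ord1 j).
- exact: in_image_of_four_point_condition.
Qed.
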